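(* Let $X=(X^{(1)},\dots,X^{(p)})\in\mathbb{R}^p$ be a random vector and $Y\in\mathbb{R}$ a random variable, with finite second moments. Suppose there is a directed acyclic graph $G$ with vertex set $\{X^{(1)},\dots,X^{(p)},Y\}$ in which $Y$ has no children, such that the distribution of $(X,Y)$ is linearly $Y$-faithful to $G$. Then the distribution of $(X,Y)$ is partially faithful.
   Context: $\rho(Z^{(1)},Z^{(2)}\mid W)$ denotes the population partial correlation. For $\mathcal{S}\subseteq\{1,\dots,p\}$, $X^{(\mathcal{S})}=\{X^{(j)};j\in\mathcal{S}\}$ and $\{j\}^C=\{1,\dots,p\}\setminus\{j\}$. In a DAG, a path between two vertices is blocked by a set $W$ of vertices (not containing the endpoints) if it contains a non-collider in $W$, or a collider (a vertex with both adjacent path edges pointing into it) such that neither it nor any of its descendants is in $W$; two vertices are d-separated by $W$ if every path between them is blocked by $W$. The distribution of $(X,Y)$ is linearly $Y$-faithful to $G$ if for all $j\in\{1,\dots,p\}$ and $\mathcal{S}\subseteq\{j\}^C$: $X^{(j)}$ and $Y$ are d-separated by $X^{(\mathcal{S})}$ in $G$ if and only if $\rho(X^{(j)},Y\mid X^{(\mathcal{S})})=0$. The distribution of $(X,Y)$ is partially faithful if for every $j$: if $\rho(Y,X^{(j)}\mid X^{(\mathcal{S})})=0$ for some $\mathcal{S}\subseteq\{j\}^C$, then $\rho(Y,X^{(j)}\mid X^{(\{j\}^C)})=0$. *)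

From HB Require Import structures.
From mathcomp Require Import all_boot all_order all_algebra.
From mathcomp Require Import all_classical all_reals all_analysis.

Set Implicit Arguments.
Unset Strict Implicit.
Unset Printing Implicit Defensive.

Import Order.TTheory GRing.Theory Num.Theory.
Local Open Scope ring_scope.

(* Vertices: [Some j] stands for X^(j) (j : 'I_p), [None] stands for Y.    *)
Definition vtx (p : nat) := option 'I_p.

Definition joint {T R : Type} (p : nat) (X : 'I_p -> T -> R) (Y : T -> R)
  (v : vtx p) : T -> R :=
  match v with Some j => X j | None => Y end.

Section partial_correlation.
Context {d : measure_display} {T : measurableType d} {R : realType}.
Context (P : probability T R) {V : finType} (Z : V -> T -> R).

Definition resid (W : {set V}) (b : {ffun V -> R}) (u : V) : T -> R :=
  fun t => Z u t - \sum_(w in W) b w * Z w t.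

(* Coefficients of the best linear predictor (L^2 projection) of Z u on
   {Z w ; w in W} (plus constants): the normal equations say that the
   residual is uncorrelated with every Z w, w in W. *)
Definition blp_coef (W : {set V}) (u : V) : {ffun V -> R} :=
  xget [ffun=> 0]
    [set b : {ffun V -> R} |
       forall w, w \in W -> covariance P (resid W b u) (Z w) = 0%E].

Definition pcov (u v : V) (W : {set V}) : R :=
  fine (covariance P (resid W (blp_coef W u) u) (resid W (blp_coef W v) v)).

Definition pcor (u v : V) (W : {set V}) : R :=
  pcov u v W / Num.sqrt (pcov u u W * pcov v v W).

End partial_correlation.

(* A directed graph on a finite vertex type is an edge relation [G]        *)
(* ([G a b] means a -> b).                                                 *)
Section dsep.
Context {V : finType} (G : rel V).

Definition acyclic : Prop := forall (x : V) (s : seq V), ~~ path G x (rcons s x).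

Definition adj : rel V := fun a b => G a b || G b a.

(* [a :: s] is a path between a and b: a nonempty sequence of distinct
   vertices, consecutive vertices being adjacent, starting at a, ending at b. *)
Definition gpath (a b : V) (s : seq V) : Prop :=
  [/\ path adj a s, last a s = b, uniq (a :: s) & s != [::]].

Definition collider (q : seq V) (x0 : V) (i : nat) : bool :=
  G (nth x0 q i.-1) (nth x0 q i) && G (nth x0 q i.+1) (nth x0 q i).

Definition desc (v x : V) : bool := connect G v x.

Definition blocked (W : {set V}) (q : seq V) (x0 : V) : Prop :=
  exists i, (0 < i < (size q).-1)%N /\
    ((~~ collider q x0 i /\ nth x0 q i \in W) \/
     (collider q x0 i /\ forall x, desc (nth x0 q i) x -> x \notin W)).

Definition dsep (a b : V) (W : {set V}) : Prop :=
  forall s, gpath a b s -> blocked W (a :: s) a.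

End dsep.

Section faithfulness.
Context {d : measure_display} {T : measurableType d} {R : realType}.
Context (P : probability T R) (p : nat) (X : 'I_p -> T -> R) (Y : T -> R).

Definition Xset (S : {set 'I_p}) : {set vtx p} := [set Some j | j in S].

Definition linearly_Y_faithful (G : rel (vtx p)) : Prop :=
  forall (j : 'I_p) (S : {set 'I_p}), j \notin S ->
    (dsep G (Some j) None (Xset S) <->
     pcor P (joint X Y) (Some j) None (Xset S) = 0).

Definition partially_faithful : Prop :=
  forall j : 'I_p,
    (exists S : {set 'I_p}, j \notin S /\
        pcor P (joint X Y) None (Some j) (Xset S) = 0) ->
    pcor P (joint X Y) None (Some j) (Xset [set~ j]) = 0.

End faithfulness.

From HB Require Import structures.
From mathcomp Require Import all_boot all_order all_algebra.
From mathcomp Require Import all_classical all_reals all_analysis.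

(* If some conditioning set d-separates X^(j) from Y, the two are not adjacent
   (the one-edge path has no interior vertex to block it).  Since Y has no
   children, the vertex preceding Y on any longer path is a parent of Y, hence
   a non-collider, and it is one of the X^(k), k <> j; so conditioning on all
   of X^({j}^C) blocks every path and d-separates X^(j) from Y as well.
   Linear Y-faithfulness turns both d-separation statements into vanishing
   partial correlations. *)

Import Order.TTheory GRing.Theory Num.Theory.
Local Open Scope ring_scope.

Lemma pcorC (d : measure_display) (T : measurableType d) (R : realType)
  (P : probability T R) (V : finType) (Z : V -> T -> R) u v W :
  pcor P Z u v W = pcor P Z v u W.
Proof.
rewrite /pcor /pcov covarianceC; congr (_ / Num.sqrt _); exact: mulrC.
Qed.

Section dsep_theory.
Variables (V : finType) (G : rel V).

Lemma dsep_nonadj (a b : V) (W : {set V}) :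
  a != b -> dsep G a b W -> ~~ adj G a b.
Proof.
move=> neq_ab sep; apply/negP => ab.
have [i [/andP[i_gt0 i_lt0] _]] :
  blocked G W [:: a; b] a by apply: sep; split; rewrite /= ?ab ?inE ?neq_ab.
by move: i_gt0 i_lt0; case: i.
Qed.

Lemma dsep_sink (a b : V) (W : {set V}) :
  (forall v, ~~ G b v) -> ~~ adj G a b ->
  (forall v, v != a -> v != b -> v \in W) -> dsep G a b W.
Proof.
move=> sink_b nadj_ab W_full s [path_s last_s uniq_s s_nil].
have n_gt1 : (1 < size s)%N.
  case: s path_s last_s s_nil uniq_s => [|x [|y s']] //= /andP[ax _] xb.
  by rewrite -xb ax in nadj_ab.
set q := a :: s; set n := size s.
have n_gt0 : (0 < n)%N by exact: ltnW.
have q_n : nth a q n = b by rewrite -last_s -[last a s]/(last a q) -nth_last.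
have n1_lt : (n.-1 < size q)%N by rewrite /= ltnS leq_pred.
have qn1_neq_b : nth a q n.-1 != b.
  by rewrite -q_n (nth_uniq _ n1_lt _ uniq_s) // neq_ltn ltn_predL n_gt0.
have qn1_neq_a : nth a q n.-1 != a.
  by rewrite -[X in _ != X]/(nth a q 0) (nth_uniq _ n1_lt _ uniq_s) // -lt0n -subn1 subn_gt0.
exists n.-1; split; first by rewrite /= -subn1 subn_gt0 n_gt1 ltn_subrL n_gt0.
left; split; last exact: W_full.
by rewrite /collider prednK // q_n (negbTE (sink_b _)) andbF.
Qed.

End dsep_theory.

Lemma mem_Xset_setC1 (p : nat) (j : 'I_p) (v : vtx p) :
  v != Some j -> v != None -> v \in Xset [set~ j].
Proof.
case: v => [k|] // k_neq_j _; apply/imsetP; exists k => //.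
by rewrite !inE; apply: contra k_neq_j => /eqP ->.
Qed.

Theorem theorem2 (d : measure_display) (T : measurableType d) (R : realType)
  (P : probability T R) (p : nat) (X : 'I_p -> T -> R) (Y : T -> R)
  (HX : forall j, X j \in Lfun P 2%:E) (HY : Y \in Lfun P 2%:E)
  (G : rel (vtx p)) (HG : acyclic G) (HYleaf : forall v, ~~ G None v)
  (Hfaith : linearly_Y_faithful P X Y G) :
  partially_faithful P X Y.
Proof.
move=> j [S [j_notin_S pcor_S]].
have sep_S : dsep G (Some j) None (Xset S).
  by apply/(Hfaith j _ j_notin_S); rewrite pcorC.
have j_notin_C : j \notin [set~ j] by rewrite !inE eqxx.
rewrite pcorC; apply/(Hfaith j _ j_notin_C).
apply: dsep_sink => //; first exact: dsep_nonadj sep_S.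
exact: mem_Xset_setC1.
Qed.
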